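(* Let $\Lambda>0$, $e\ge\Lambda$, $\phi_h>0$, $f:[0,\phi_h]\to(0,1]$ strictly concave, strictly decreasing, differentiable with $f(0)=1$. Consider the two-player game with action sets $[0,\phi_h]$ and payoffs $\tilde{\mathcal M}_i(\phi_i,\phi_{-i})=0$ if $\phi_i>\phi_{-i}$, $=\frac{\Lambda}{2}f(\phi_i)\phi_i$ if $\phi_i=\phi_{-i}$, and $=\min\{\Lambda f(\phi_i),e\}\phi_i$ if $\phi_i<\phi_{-i}$. Let $\epsilon>0$ and suppose $0<\delta\le\phi_h$ satisfies $\sup_{\phi\le\delta}\Lambda f(\phi)\phi<\epsilon$. Then $(\delta,\delta)$ is an $\epsilon$-Nash equilibrium.
   Context: These payoffs are the limiting (driver abandonment rate $\beta\to0$) long-run revenue rates of two symmetric ride-hailing platforms using static prices, when passengers (total Poisson rate $\Lambda$) split across platforms by a Wardrop equilibrium equalizing the probability of not obtaining a ride, in the regime $e\ge\Lambda$ where $e$ is the effective driver arrival rate per platform; $f(\phi)$ is the probability a passenger accepts price $\phi$. A profile $(\phi_1,\phi_2)$ is an $\epsilon$-Nash equilibrium if for each player $i$ and each $\phi_i'\in[0,\phi_h]$, $\tilde{\mathcal M}_i(\phi_i',\phi_{-i})\le\tilde{\mathcal M}_i(\phi_i,\phi_{-i})+\epsilon$. *)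

From Stdlib Require Import Reals Lra.
Open Scope R_scope.

Definition strictly_concave_on (f : R -> R) (a b : R) : Prop :=
  forall x y t, a <= x <= b -> a <= y <= b -> x <> y -> 0 < t < 1 ->
    t * f x + (1 - t) * f y < f (t * x + (1 - t) * y).

Definition strictly_decreasing_on (f : R -> R) (a b : R) : Prop :=
  forall x y, a <= x <= b -> a <= y <= b -> x < y -> f y < f x.

Definition differentiable_on (f : R -> R) (a b : R) : Prop :=
  forall x, a <= x <= b -> exists l,
    limit1_in (fun y => (f y - f x) / (y - x))
              (fun y => a <= y <= b /\ y <> x) l x.

Definition payoff (Lam e : R) (f : R -> R) (phi_i phi_o : R) : R :=
  if Rlt_dec phi_o phi_i then 0
  else if Req_EM_T phi_i phi_o then Lam / 2 * f phi_i * phi_i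
  else Rmin (Lam * f phi_i) e * phi_i.

Definition eps_Nash (Lam e phih : R) (f : R -> R) (eps p1 p2 : R) : Prop :=
  (forall p', 0 <= p' <= phih ->
     payoff Lam e f p' p2 <= payoff Lam e f p1 p2 + eps) /\
  (forall p', 0 <= p' <= phih ->
     payoff Lam e f p' p1 <= payoff Lam e f p2 p1 + eps).

From Stdlib Require Import Reals Lra.
Open Scope R_scope.

(* Undercutting to any price p' <= delta earns at most the full revenue
   Lam f(p') p', which is below eps by the choice of delta; overcutting earns
   nothing. *)

Lemma payoff_overcut (Lam e : R) (f : R -> R) (p q : R) :
  q < p -> payoff Lam e f p q = 0.
Proof.
  intros Hqp; unfold payoff.
  destruct (Rlt_dec q p); [reflexivity | contradiction].
Qed.

Lemma payoff_le_revenue (Lam e : R) (f : R -> R) (p q : R) :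
  0 <= p -> 0 <= Lam * f p * p -> payoff Lam e f p q <= Lam * f p * p.
Proof.
  intros Hp Hrev; unfold payoff.
  destruct (Rlt_dec q p); [lra |].
  destruct (Req_EM_T p q); [lra |].
  apply Rmult_le_compat_r; [exact Hp | apply Rmin_l].
Qed.

Lemma payoff_tie_ge0 (Lam e : R) (f : R -> R) (p : R) :
  0 <= p -> 0 <= Lam * f p * p -> 0 <= payoff Lam e f p p.
Proof.
  intros Hp Hrev; unfold payoff.
  destruct (Rlt_dec p p); [lra |].
  destruct (Req_EM_T p p); [lra | contradiction].
Qed.

Lemma eps_Nash_diag (Lam e phih : R) (f : R -> R) (eps delta : R) :
  0 < eps ->
  0 <= payoff Lam e f delta delta ->
  (forall p, 0 <= p <= delta -> payoff Lam e f p delta < eps) ->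
  eps_Nash Lam e phih f eps delta delta.
Proof.
  intros Heps Htie Hlow.
  assert (Hdev : forall p, 0 <= p <= phih ->
            payoff Lam e f p delta <= payoff Lam e f delta delta + eps).
  { intros p Hp.
    destruct (Rlt_le_dec delta p) as [Hover | Hunder].
    - rewrite payoff_overcut by exact Hover; lra.
    - assert (Hp_low := Hlow p (conj (proj1 Hp) Hunder)); lra. }
  split; exact Hdev.
Qed.

Theorem theorem6 (Lam e phih : R) (f : R -> R) (eps delta : R) :
  0 < Lam -> Lam <= e -> 0 < phih ->
  (forall x, 0 <= x <= phih -> 0 < f x <= 1) ->
  strictly_concave_on f 0 phih ->
  strictly_decreasing_on f 0 phih ->
  differentiable_on f 0 phih ->
  f 0 = 1 ->
  0 < eps ->
  0 < delta <= phih ->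
  (exists s, is_lub (fun v => exists phi, 0 <= phi <= delta /\ v = Lam * f phi * phi) s
             /\ s < eps) ->
  eps_Nash Lam e phih f eps delta delta.
Proof.
  intros HLam _ _ Hf _ _ _ _ Heps Hdelta [s [[Hs_ub _] Hs_eps]].
  assert (Hrev : forall p, 0 <= p <= delta -> 0 <= Lam * f p * p).
  { intros p Hp; destruct (Hf p ltac:(lra)).
    apply Rmult_le_pos; [apply Rmult_le_pos |]; lra. }
  apply eps_Nash_diag; [exact Heps | |].
  - apply payoff_tie_ge0; [lra | apply Hrev; lra].
  - intros p Hp.
    assert (Hp_s : Lam * f p * p <= s) by (apply Hs_ub; exists p; split; [exact Hp | reflexivity]).
    assert (Hp_rev := payoff_le_revenue Lam e f p delta (proj1 Hp) (Hrev p Hp)).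
    lra.
Qed.
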